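(* Let $\ell:\mathcal{Y}\times\mathcal{Y}\to\mathbb{R}_{\ge0}$ be a loss with $\ell(y,y)=0$ for all $y$, and let $\epsilon_+\ge 0$. Then there exist a feature space $\mathcal{X}=\mathcal{X}_D\times\mathcal{X}_A\times\mathcal{X}_P$, a finite label set $\mathcal{Y}$, a probability distribution $p$ on $\mathcal{X}$, a class $\mathcal{E}$ of explanations, a black box $B:\mathcal{X}\to\mathcal{Y}$ and an explanation $E\in\mathcal{E}$ such that (i) $E$ has perfect fidelity, i.e. $L(E,B)=0$, and (ii) $E$ is potentially misleading for $B$, i.e. $\hat{\mathcal{O}}(E)\neq\hat{\mathcal{O}}^*(B)$.
   Context: Setting: the input space decomposes as $\mathcal{X}=\mathcal{X}_D\times\mathcal{X}_A\times\mathcal{X}_P$, where $\mathcal{X}_D$ is the product of the coordinates of the ''desired features'' $D$, $\mathcal{X}_A$ of the ''ambivalent features'' $A$, and $\mathcal{X}_P$ of the ''prohibited features'' $P$. A black box is a (measurable) function $B:\mathcal{X}\to\mathcal{Y}$; an explanation is an element of a class $\mathcal{E}$ of (measurable) functions $\mathcal{X}\to\mathcal{Y}$. For a data distribution $p$ on $\mathcal{X}$ and loss $\ell$, the relative error is $L(F,F')=\mathbb{E}_{x\sim p}[\ell(F(x),F'(x))]$, and the fidelity of $E$ is $1-L(E,B)$. A function $f:\mathcal{X}\to\mathcal{Y}$ depends on a feature coordinate $j$ if there are $x,x'\in\mathcal{X}$ differing only in coordinate $j$ with $f(x)\neq f(x')$. A function (black box or explanation) is acceptable if it depends on every desired feature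 and on no prohibited feature; $\mathcal{E}_+\subseteq\mathcal{E}$ denotes the acceptable explanations and $\mathcal{B}_+$ the acceptable black boxes. With fidelity threshold $\epsilon_+\ge0$, define $\hat{\mathcal{O}}(E)=\mathbb{I}[E\in\mathcal{E}_+\wedge L(E,B)\le\epsilon_+]$ and $\hat{\mathcal{O}}^*(B)=\mathbb{I}[B\in\mathcal{B}_+]$. An explanation $E$ of $B$ is potentially misleading if $\hat{\mathcal{O}}(E)\neq\hat{\mathcal{O}}^*(B)$. *)

From HB Require Import structures.
From mathcomp Require Import all_boot all_order all_algebra.
From mathcomp Require Import all_classical all_reals all_analysis.
Set Implicit Arguments. Unset Strict Implicit. Unset Printing Implicit Defensive.
Import Order.TTheory GRing.Theory Num.Theory.
Local Open Scope classical_set_scope.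
Local Open Scope ring_scope.

Inductive feature_kind := Desired | Ambivalent | Prohibited.

Section Setting.
Context {d : measure_display} {X : measurableType d} {I : finType}
  {C : I -> Type} (pi : forall i : I, X -> C i).

(* X is (isomorphic, via the coordinate projections pi, to) the product of
   the feature coordinates C i; grouping the coordinates by kind gives
   X = X_D x X_A x X_P. *)
Definition product_coords : Prop :=
  bijective (fun x : X => (fun i : I => pi i x) : forall i : I, C i).

Definition depends_on {Y : Type} (f : X -> Y) (j : I) : Prop :=
  exists x x' : X, (forall k : I, k <> j -> pi k x = pi k x') /\ f x <> f x'.

Definition acceptable (cls : I -> feature_kind) {Y : Type} (f : X -> Y) : Prop :=
  (forall j, cls j = Desired -> depends_on f j) /\
  (forall j, cls j = Prohibited -> ~ depends_on f j).
End Setting.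

(* measurability of a map into a finite label set with the discrete sigma-algebra *)
Definition measurable_into {d : measure_display} {X : measurableType d}
  {Y : finType} (f : X -> Y) : Prop :=
  forall y : Y, measurable (f @^-1` [set y]).

Definition rel_err {d : measure_display} {X : measurableType d} {R : realType}
  {Y : Type} (P : probability X R) (loss : Y -> Y -> R) (F F' : X -> Y) : \bar R :=
  (\int[P]_x (loss (F x) (F' x))%:E)%E.

Definition O_hat {d : measure_display} {X : measurableType d} {R : realType}
  {I : finType} {C : I -> Type} (pi : forall i, X -> C i) (cls : I -> feature_kind)
  {Y : Type} (P : probability X R) (loss : Y -> Y -> R) (eps : R)
  (Ecal : set (X -> Y)) (B E : X -> Y) : Prop :=
  (Ecal E /\ acceptable pi cls E) /\ (rel_err P loss E B <= eps%:E)%E.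

Definition O_star {d : measure_display} {X : measurableType d}
  {I : finType} {C : I -> Type} (pi : forall i, X -> C i) (cls : I -> feature_kind)
  {Y : Type} (B : X -> Y) : Prop :=
  acceptable pi cls B.

(* E is potentially misleading for B: O-hat(E) <> O-hat*(B) (as truth values) *)
Definition potentially_misleading {d : measure_display} {X : measurableType d}
  {R : realType} {I : finType} {C : I -> Type} (pi : forall i, X -> C i)
  (cls : I -> feature_kind) {Y : Type} (P : probability X R)
  (loss : Y -> Y -> R) (eps : R) (Ecal : set (X -> Y)) (B E : X -> Y) : Prop :=
  ~ (O_hat pi cls P loss eps Ecal B E <-> O_star pi cls B).

From HB Require Import structures.
From mathcomp Require Import all_boot all_order all_algebra.
From mathcomp Require Import all_classical all_reals all_analysis.
From mathcomp Require Import measurable_realfun.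
Import Order.TTheory GRing.Theory Num.Theory.
Local Open Scope classical_set_scope.
Local Open Scope ring_scope.

(* Fidelity is measured only on the data distribution, so an explanation can
   agree with the black box there while ignoring how the black box behaves
   off-distribution.  With a single prohibited feature x : bool, the black box
   B = id uses it, whereas the constant explanation E = true uses no feature
   at all and is therefore acceptable; under the point mass at true the two
   agree almost surely, so E has perfect fidelity and passes the audit that B
   fails. *)

Section Dependence.
Context {d : measure_display} {X : measurableType d} {I : finType}
  {C : I -> Type} (pi : forall i : I, X -> C i).

Lemma not_depends_on_cst {Y : Type} (y : Y) (j : I) :
  ~ depends_on pi (fun=> y) j.
Proof. by case=> x [x' [_]]. Qed.

Lemma acceptable_cst (cls : I -> feature_kind) {Y : Type} (y : Y) :
  (forall j, cls j <> Desired) -> acceptable pi cls (fun=> y).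
Proof.
by move=> noD; split=> j cj //; [case: (noD j) | exact: not_depends_on_cst].
Qed.

End Dependence.

Section Audit.
Context {d : measure_display} {X : measurableType d} {R : realType}
  {I : finType} {C : I -> Type} (pi : forall i, X -> C i)
  (cls : I -> feature_kind) {Y : Type} (P : probability X R)
  (loss : Y -> Y -> R) (eps : R) (Ecal : set (X -> Y)).

Lemma O_hat_perfect_fidelity (B E : X -> Y) :
  0 <= eps -> Ecal E -> acceptable pi cls E -> rel_err P loss E B = 0%E ->
  O_hat pi cls P loss eps Ecal B E.
Proof. by move=> eps_ge0 EE accE fidE; split=> //; rewrite fidE lee_fin. Qed.

Lemma potentially_misleading_unacceptable (B E : X -> Y) :
  O_hat pi cls P loss eps Ecal B E -> ~ acceptable pi cls B ->
  potentially_misleading pi cls P loss eps Ecal B E.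
Proof. by move=> OE notB [/(_ OE)]. Qed.

End Audit.

Lemma rel_err_dirac {d : measure_display} {X : measurableType d}
    {R : realType} {Y : Type} (a : X) (loss : Y -> Y -> R) (F F' : X -> Y) :
  measurable_fun [set: X] (fun x => (loss (F x) (F' x))%:E : \bar R) ->
  rel_err (\d_a : probability X R) loss F F' = (loss (F a) (F' a))%:E.
Proof. by move=> mf; rewrite /rel_err integral_dirac // diracE in_setT mul1e. Qed.

Definition bool_coord (i : unit) (x : bool) : bool := x.

Lemma product_coords_bool : product_coords bool_coord.
Proof.
exists (fun h : unit -> bool => h tt) => // h.
by apply: functional_extensionality_dep => -[].
Qed.

Lemma depends_on_bool_coord : depends_on bool_coord id tt.
Proof. by exists true, false; split=> // -[]. Qed.

Theorem theorem1 (R : realType) (loss : forall Y : finType, Y -> Y -> R)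
  (loss_ge0 : forall (Y : finType) (y y' : Y), 0 <= loss Y y y')
  (loss_refl : forall (Y : finType) (y : Y), loss Y y y = 0)
  (eps : R) (eps_ge0 : 0 <= eps) :
  exists (d : measure_display) (X : measurableType d) (I : finType)
    (C : I -> Type) (pi : forall i : I, X -> C i) (cls : I -> feature_kind)
    (Y : finType) (P : probability X R) (Ecal : set (X -> Y)) (B E : X -> Y),
    product_coords pi /\
    (forall F, Ecal F -> measurable_into F) /\
    measurable_into B /\
    Ecal E /\
    rel_err P (loss Y) E B = 0%E /\
    potentially_misleading pi cls P (loss Y) eps Ecal B E.
Proof.
pose E : bool -> bool := fun=> true.
pose P : probability bool R := \d_true.
have fidelity : rel_err P (loss bool) E id = 0%E.
  by rewrite rel_err_dirac // loss_refl.
exists default_measure_display, bool, unit, (fun=> bool), bool_coord.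
exists (fun=> Prohibited), bool, P, [set E], id, E.
split; first exact: product_coords_bool.
split; first by move=> F _ y.
split; first by move=> y.
split; first by [].
split; first exact: fidelity.
apply: potentially_misleading_unacceptable.
  by apply: O_hat_perfect_fidelity => //; exact: acceptable_cst.
by case=> _ /(_ tt erefl); apply; exact: depends_on_bool_coord.
Qed.
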